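(* Under the setting of the context, let $\kappa\in\mathbb{N}^d$ and assume $f$ is uniformly Lipschitz of order $\|\kappa\|_\infty$. (a) (Invariance) Suppose a sequence $(G_n)\subset\mathcal G$ with $\widetilde W_\kappa(G_n,G_0)\to0$ admits some $\kappa$-minimal form all of whose ratios $\xi_l(G_n)/\widetilde W_\kappa^{\|\kappa\|_\infty}(G_n,G_0)$ tend to $0$. Then for every $\kappa$-minimal form $\sum_{l=1}^{T'}(\xi'_l(G_n)/\widetilde W_\kappa^{\|\kappa\|_\infty}(G_n,G_0))H'_l(x)$ along the same sequence, there is a subsequence along which $\xi'_l(G_n)/\widetilde W_\kappa^{\|\kappa\|_\infty}(G_n,G_0)\to0$ for all $l$. (b) (Monotonicity) If $G_0$ is $\kappa$-singular relative to $\mathcal G$, then $G_0$ is $\kappa'$-singular relative to $\mathcal G$ for every $\kappa'\in\mathbb{N}^d$ with $\kappa'\preceq\kappa$. In particular, if $G_0$ is $r$-singular for some integer $r>1$, it is $(r-1)$-singular.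
   Context: Setting: $\Theta\subset\mathbb{R}^d$ compact; $\{f(\cdot|\eta):\eta\in\Theta\}$ a family of probability densities on a Euclidean space such that $f(\cdot|\eta)$ for distinct $\eta$ are linearly independent functions. For $G=\sum_ip_i\delta_{\eta_i}$, $p_G(x)=\sum_ip_if(x|\eta_i)$. $f$ is uniformly Lipschitz of order $r$ if it is $r$ times differentiable in $\eta$ and there are $C,\delta>0$ with $\sum_{|\alpha|=r}|\partial^\alpha_\eta f(x|\eta_1)-\partial^\alpha_\eta f(x|\eta_2)|\,|\gamma^\alpha|\le C\|\eta_1-\eta_2\|_r^\delta\|\gamma\|_r^r$ for all $x$, $\eta_1,\eta_2\in\Theta$, $\gamma\in\mathbb{R}^d$. Distances: $W_r$ is the order-$r$ Wasserstein distance with $\ell_r$ ground norm; $d_\kappa(\theta_1,\theta_2)=(\sum_i|\theta_1^{(i)}-\theta_2^{(i)}|^{\kappa_i})^{1/\|\kappa\|_\infty}$ and $\widetilde W_\kappa(G,G')=(\inf_q\sum q_{ij}d_\kappa^{\|\kappa\|_\infty}(\eta_i,\eta'_j))^{1/\|\kappa\|_\infty}$ (inf over couplings); $\widetilde W_{(r,\dots,r)}=W_r$. Fix $G_0=\sum_{i=1}^{k_0}p^0_i\delta_{\eta^0_i}$ with distinct atoms; sequences $G_n\to G_0$ are written (after subsequence/relabelling) as $\sum_{i=1}^{k_0+\bar l}\sum_{j=1}^{s_i}p^n_{ij}\delta_{\eta^n_{ij}}$ with $\eta^n_{ij}\to\eta^0_i$, extra distinct limit points $\eta^0_i$ ($i>k_0$)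 with $p^0_i=0$, $\Delta\eta_{ij}=\eta_{ij}-\eta_i^0$, $\Delta p_{i\cdot}=\sum_jp_{ij}-p_i^0$. Let $\mathcal G\ni G_0$ be a class of discrete probability measures on $\Theta$ with uniformly bounded number of atoms. A $\kappa$-minimal form along a sequence $G_n\in\mathcal G$, $\widetilde W_\kappa(G_n,G_0)\to0$, is an identity $\frac{p_{G_n}(x)-p_{G_0}(x)}{\widetilde W_\kappa^{\|\kappa\|_\infty}(G_n,G_0)}=\sum_{l=1}^{T}\frac{\xi_l(G_n)}{\widetilde W_\kappa^{\|\kappa\|_\infty}(G_n,G_0)}H_l(x)+o(1)$ for a.e. $x$ as $n\to\infty$, where $H_1,\dots,H_T$ are linearly independent functions not depending on $n$, and each $\xi_l(G)$ is a polynomial (coefficients depending only on $G_0$) in the components of $\Delta\eta_{ij},\Delta p_{i\cdot},p_{ij}$. $G_0$ is $\kappa$-singular relative to $\mathcal G$ if some sequence in $\mathcal G$ tending to $G_0$ in $\widetilde W_\kappa$ admits a $\kappa$-minimal form with $\xi_l(G_n)/\widetilde W_\kappa^{\|\kappa\|_\infty}(G_n,G_0)\to0$ for all $l$. For integer $r\ge1$, $r$-singular means $(r,\dots,r)$-singular. $\kappa'\preceq\kappa$ means componentwise $\le$. *)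

From mathcomp Require Import all_boot all_order all_algebra.
From mathcomp Require Import all_classical all_reals all_analysis.
Export Order.TTheory GRing.Theory Num.Theory numFieldNormedType.Exports.

Unset Implicit Arguments.
Unset Strict Implicit.
Unset Printing Implicit Defensive.

Local Open Scope ring_scope.
Local Open Scope classical_set_scope.

Section MixtureDefs.
Context {R : realType}.
Local Notation vec n := 'rV[R]_n.

(* ---------- discrete measures on R^d, represented by their weight function
   G : R^d -> R  (G t = mass of the atom t, 0 off the support) ---------- *)
Definition supp {d} (G : vec d -> R) : set (vec d) := [set t | G t != 0].

Definition discrete_prob {d} (Theta : set (vec d)) (G : vec d -> R) : Prop :=
  (forall t, 0 <= G t) /\ finite_set (supp G) /\ supp G `<=` Theta /\
  \sum_(t \in supp G) G t = 1.

Definition atoms_le {d} (K : nat) (G : vec d -> R) : Prop :=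
  exists s : seq (vec d), (size s <= K)%N /\ supp G `<=` [set t | t \in s].

Definition atoms_measure {d k} (p : 'I_k -> R) (e : 'I_k -> vec d) : vec d -> R :=
  fun t => \sum_(i < k | e i == t) p i.

(* mixture density p_G(x) = sum_{atoms t} G{t} f(x|t) ;  f x t = f(x|t) *)
Definition mixture {d m} (f : vec m -> vec d -> R) (G : vec d -> R) (x : vec m) : R :=
  \sum_(t \in supp G) G t * f x t.

Definition kinf {d} (kappa : 'I_d -> nat) : nat := \max_(i < d) kappa i.

Definition d_kappa {d} (kappa : 'I_d -> nat) (t1 t2 : vec d) : R :=
  powR (\sum_(i < d) `|t1 ord0 i - t2 ord0 i| ^+ kappa i) (kinf kappa)%:R^-1.

Definition coupling {d} (G G' : vec d -> R) (q : vec d -> vec d -> R) : Prop :=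
  (forall t t', 0 <= q t t') /\
  (forall t t', q t t' != 0 -> G t != 0 /\ G' t' != 0) /\
  (forall t, \sum_(t' \in supp G') q t t' = G t) /\
  (forall t', \sum_(t \in supp G) q t t' = G' t').

Definition Wtilde {d} (kappa : 'I_d -> nat) (G G' : vec d -> R) : R :=
  powR (inf [set c | exists q, coupling G G' q /\
           c = \sum_(t \in supp G) \sum_(t' \in supp G')
                  q t t' * d_kappa kappa t t' ^+ kinf kappa])
       (kinf kappa)%:R^-1.

Definition box_vol {m} (a b : vec m) : R := \prod_(i < m) (b ord0 i - a ord0 i).
Definition in_box {m} (a b x : vec m) : Prop :=
  forall i, a ord0 i <= x ord0 i <= b ord0 i.
Definition lebesgue_null {m} (N : set (vec m)) : Prop :=
  forall eps : R, 0 < eps -> exists a b : nat -> vec m,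
    (forall k i, a k ord0 i <= b k ord0 i) /\
    (forall x, N x -> exists k, in_box (a k) (b k) x) /\
    (forall n, \sum_(k < n) box_vol (a k) (b k) <= eps).
Definition ae {m} (P : vec m -> Prop) : Prop :=
  exists N, lebesgue_null N /\ forall x, ~ N x -> P x.

Definition ae_lin_indep {m T} (H : 'I_T -> vec m -> R) : Prop :=
  forall c : 'I_T -> R, ae (fun x => \sum_(l < T) c l * H l x = 0) ->
  forall l, c l = 0.

Definition pdiff {d} (i : 'I_d) (g : vec d -> R) : vec d -> R :=
  fun t => 'D_(delta_mx 0 i) g t.
Definition pdl {d} (l : seq 'I_d) (g : vec d -> R) : vec d -> R := foldr pdiff g l.
Definition mindex_list {d} (alpha : 'I_d -> nat) : seq 'I_d :=
  flatten [seq nseq (alpha i) i | i <- enum 'I_d].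
Definition pderiv {d} (alpha : 'I_d -> nat) (g : vec d -> R) : vec d -> R :=
  pdl (mindex_list alpha) g.
Definition lr_norm {d} (r : nat) (v : vec d) : R :=
  powR (\sum_(i < d) `|v ord0 i| ^+ r) r%:R^-1.

Definition r_times_diff_on {d} (r : nat) (U : set (vec d)) (g : vec d -> R) : Prop :=
  forall l : seq 'I_d, (size l < r)%N -> forall t, U t -> differentiable (pdl l g) t.

Definition unif_lipschitz {d m} (Theta : set (vec d)) (f : vec m -> vec d -> R)
    (r : nat) : Prop :=
  (exists U : set (vec d), open U /\ Theta `<=` U /\
     forall x, r_times_diff_on r U (f x)) /\
  exists C delta : R, 0 < C /\ 0 < delta /\
    forall x (t1 t2 gam : vec d), Theta t1 -> Theta t2 ->
      \sum_(a : {ffun 'I_d -> 'I_r.+1} | (\sum_(i < d) (a i : nat) == r)%N)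
         `|pderiv (fun i => (a i : nat)) (f x) t1
           - pderiv (fun i => (a i : nat)) (f x) t2|
         * `|\prod_(i < d) gam ord0 i ^+ a i|
      <= C * powR (lr_norm r (t1 - t2)) delta * lr_norm r gam ^+ r.

(* ---------- relabelled representation of a sequence G_n -> G_0 ----------
   G_0 = sum_{i<k0} p0_i delta_{e0_i}.  The atoms of G_n are indexed by
   j : 'I_N; atom j belongs to group grp j : 'I_(k0+lbar), has weight w n j
   and location at n j, and at n j -> lim (grp j).  The limit points
   lim i (i < k0) are the atoms of G_0, the others are the extra limit
   points (with p0_i = 0). *)
Record relabel (d k0 : nat) := Relabel {
  rl_N : nat;
  rl_lbar : nat;
  rl_grp : 'I_rl_N -> 'I_(k0 + rl_lbar);
  rl_lim : 'I_(k0 + rl_lbar) -> vec d;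
  rl_w : nat -> 'I_rl_N -> R;
  rl_at : nat -> 'I_rl_N -> vec d }.
Arguments rl_N {d k0} r.
Arguments rl_lbar {d k0} r.
Arguments rl_grp {d k0} r _.
Arguments rl_lim {d k0} r _.
Arguments rl_w {d k0} r _ _.
Arguments rl_at {d k0} r _ _.

Definition relabel_of {d k0} (e0 : 'I_k0 -> vec d) (Gs : nat -> vec d -> R)
    (rp : relabel d k0) : Prop :=
  injective (rl_lim rp) /\
  (forall i : 'I_k0, rl_lim rp (lshift (rl_lbar rp) i) = e0 i) /\
  (forall n j, 0 < rl_w rp n j) /\
  (forall n, injective (rl_at rp n)) /\
  (forall n, Gs n = atoms_measure (rl_w rp n) (rl_at rp n)) /\
  (forall j, (fun n => rl_at rp n j) @ \oo --> rl_lim rp (rl_grp rp j)).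

(* variables of the polynomials xi_l:
   components of Delta eta_j (j, c), Delta p_{i.} (i), and p_j (j) *)
Definition rl_var {d k0} (rp : relabel d k0) : finType :=
  (('I_(rl_N rp) * 'I_d) + 'I_(k0 + rl_lbar rp) + 'I_(rl_N rp))%type.

Definition p0ext {k0 lbar} (p0 : 'I_k0 -> R) (i : 'I_(k0 + lbar)) : R :=
  match fintype.split i with inl i0 => p0 i0 | inr _ => 0 end.

Definition rl_val {d k0} (p0 : 'I_k0 -> R) (rp : relabel d k0) (n : nat)
    (v : rl_var rp) : R :=
  match v with
  | inl (inl (j, c)) => rl_at rp n j ord0 c - rl_lim rp (rl_grp rp j) ord0 c
  | inl (inr i) => \sum_(j < rl_N rp | rl_grp rp j == i) rl_w rp n j - p0ext p0 i
  | inr j => rl_w rp n j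
  end.


(* polynomials with real coefficients in the variables V:
   finite lists of monomials (coefficient, exponent vector) *)
Definition mpolyseq (V : finType) := seq (R * {ffun V -> nat}).
Definition peval {V : finType} (P : mpolyseq V) (val : V -> R) : R :=
  \sum_(mo <- P) mo.1 * \prod_(v : V) val v ^+ mo.2 v.

Definition xi_ratio {d k0} (kappa : 'I_d -> nat) (p0 : 'I_k0 -> R)
    (e0 : 'I_k0 -> vec d) (Gs : nat -> vec d -> R) (rp : relabel d k0)
    (P : mpolyseq (rl_var rp)) (n : nat) : R :=
  peval P (rl_val p0 rp n) / Wtilde kappa (Gs n) (atoms_measure p0 e0) ^+ kinf kappa.


Definition kminimal_form {d m k0} (f : vec m -> vec d -> R) (kappa : 'I_d -> nat)
    (p0 : 'I_k0 -> R) (e0 : 'I_k0 -> vec d) (Gs : nat -> vec d -> R)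
    (rp : relabel d k0) (T : nat) (H : 'I_T -> vec m -> R)
    (xi : 'I_T -> mpolyseq (rl_var rp)) : Prop :=
  relabel_of e0 Gs rp /\ ae_lin_indep H /\
  (forall n, 0 < Wtilde kappa (Gs n) (atoms_measure p0 e0)) /\
  ae (fun x =>
    (fun n => (mixture f (Gs n) x - mixture f (atoms_measure p0 e0) x)
                / Wtilde kappa (Gs n) (atoms_measure p0 e0) ^+ kinf kappa
              - \sum_(l < T) xi_ratio kappa p0 e0 Gs rp (xi l) n * H l x)
    @ \oo --> 0).


Definition kseq {d} (Gcal : set (vec d -> R)) (kappa : 'I_d -> nat)
    (G0 : vec d -> R) (Gs : nat -> vec d -> R) : Prop :=
  (forall n, Gcal (Gs n)) /\ (fun n => Wtilde kappa (Gs n) G0) @ \oo --> 0.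

Definition kappa_singular {d m k0} (f : vec m -> vec d -> R)
    (Gcal : set (vec d -> R)) (kappa : 'I_d -> nat)
    (p0 : 'I_k0 -> R) (e0 : 'I_k0 -> vec d) : Prop :=
  exists Gs, kseq Gcal kappa (atoms_measure p0 e0) Gs /\
  exists (rp : relabel d k0) (T : nat) (H : 'I_T -> vec m -> R)
         (xi : 'I_T -> mpolyseq (rl_var rp)),
    kminimal_form f kappa p0 e0 Gs rp T H xi /\
    forall l, xi_ratio kappa p0 e0 Gs rp (xi l) @ \oo --> 0.

End MixtureDefs.

Arguments rl_val {R d k0} p0 rp n v.
Arguments xi_ratio {R d k0} kappa p0 e0 Gs rp P n.
Arguments kminimal_form {R d m k0} f kappa p0 e0 Gs rp T H xi.

From mathcomp Require Import all_boot all_order all_algebra.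
From mathcomp Require Import all_classical all_reals all_analysis.
From mathcomp Require Import ring.
Import Order.TTheory GRing.Theory Num.Theory numFieldNormedType.Exports.
Set Implicit Arguments.
Unset Strict Implicit.

(* (a) Subtracting two κ-minimal forms along the same sequence shows that
   Σ_l ξ'_l(G_n)/W^‖κ‖ · H'_l(x) → 0 off a null set.  Linear independence of the
   H'_l on the complement of that set forces every coefficient sequence to tend to 0
   (eliminate H'_0 at a point where it does not vanish and induct), so the whole
   sequence serves as the subsequence.
   (b) For κ' ⪯ κ and coordinate differences bounded by B ≥ 1 on Θ, the costs
   |Δ|^κ_i ≤ B^‖κ‖ |Δ|^κ'_i and |Δ|^κ'_i ≤ ε^-‖κ‖ |Δ|^κ_i + ε give
   W_κ^‖κ‖ ≤ B^‖κ‖ W_κ'^‖κ'‖ and W_κ'^‖κ'‖ ≤ ε^-‖κ‖ W_κ^‖κ‖ + dε.  Hence G_n → G_0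
   in W_κ' as well, and p_{G_n} - p_{G_0} = o(W_κ^‖κ‖) = o(W_κ'^‖κ'‖), which is a
   κ'-minimal form without terms. *)

Local Open Scope ring_scope.
Local Open Scope classical_set_scope.

Section NullSequences.
Context {R : realType}.
Implicit Types u v : nat -> R.

Lemma cvg0_ext u v : (forall n, u n = v n) -> v @ \oo --> 0 -> u @ \oo --> 0.
Proof. by move=> uv; have -> : u = v by apply: funext. Qed.

Lemma cvg0D u v : u @ \oo --> 0 -> v @ \oo --> 0 -> (fun n => u n + v n) @ \oo --> 0.
Proof. move=> u0 v0; have h := cvgD u0 v0; rewrite addr0 in h; exact: h. Qed.

Lemma cvg0B u v : u @ \oo --> 0 -> v @ \oo --> 0 -> (fun n => u n - v n) @ \oo --> 0.
Proof. move=> u0 v0; have h := cvgB u0 v0; rewrite subr0 in h; exact: h. Qed.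

Lemma cvg0Ml (c : R) u : u @ \oo --> 0 -> (fun n => c * u n) @ \oo --> 0.
Proof. move=> u0; have h := cvgMl_tmp (a := c) u0; rewrite mulr0 in h; exact: h. Qed.

Lemma cvg0Mr (c : R) u : u @ \oo --> 0 -> (fun n => u n * c) @ \oo --> 0.
Proof. move=> u0; have h := cvgMr_tmp (b := c) u0; rewrite mul0r in h; exact: h. Qed.

Lemma cvg0_sum (T : nat) (u : 'I_T -> nat -> R) :
  (forall l, u l @ \oo --> 0) -> (fun n => \sum_(l < T) u l n) @ \oo --> 0.
Proof.
move=> u0; have := @cvg_big R 'I_T +%R 0 xpredT add_continuous nat \oo
  (index_enum 'I_T) u (fun _ => 0) _ (fun l _ => u0 l).
by rewrite big1 //; apply.
Qed.

Lemma cvg0X (u : nat -> R) (K : nat) :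
  (0 < K)%N -> u @ \oo --> 0 -> (fun n => u n ^+ K) @ \oo --> 0.
Proof.
case: K => // K _ u0; elim: K => [|K IH]; first exact: cvg0_ext (fun n => expr1 _) u0.
apply: cvg0_ext (fun n => exprSr (u n) K.+1) _.
have h := cvgM IH u0; rewrite mulr0 in h; exact: h.
Qed.

Lemma cvg0_le_scale (u v : nat -> R) (C : R) :
  0 < C -> (forall n, `|v n| <= C * `|u n|) -> u @ \oo --> 0 -> v @ \oo --> 0.
Proof.
move=> C0 vu /cvgr0Pnorm_le u0; apply/cvgr0Pnorm_le => eps eps0.
apply: filterS (u0 _ (divr_gt0 eps0 C0)) => n un.
by apply: le_trans (vu n) _; rewrite -ler_pdivlMl // mulrC.
Qed.

Lemma cvg0_affine_bound (w w' : nat -> R) (K K' : nat) (c : R) :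
  (0 < K)%N -> (0 < K')%N -> 0 <= c -> (forall n, 0 <= w' n) ->
  (forall n e, 0 < e -> e <= 1 -> w' n ^+ K' <= e^-1 ^+ K * w n ^+ K + c * e) ->
  w @ \oo --> 0 -> w' @ \oo --> 0.
Proof.
move=> K0 K'0 c0 w'0 bound w0; apply/cvgr0Pnorm_le => eps eps0.
have del0 : 0 < eps ^+ K' / 2 by rewrite divr_gt0 ?exprn_gt0.
have c1 : 0 < c + 1 by rewrite ltr_wpDl.
pose e := Num.min 1 (eps ^+ K' / 2 / (c + 1)).
have e0 : 0 < e by rewrite lt_min ltr01 divr_gt0.
have e1 : e <= 1 by rewrite ge_min lexx.
have ce : c * e <= eps ^+ K' / 2.
  apply: (le_trans (y := (c + 1) * e)); first by rewrite ler_wpM2r ?lerDl // ltW.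
  by rewrite -ler_pdivlMl // mulrC ge_min lexx orbT.
have /cvgr0Pnorm_le /(_ _ del0) := cvg0Ml (e^-1 ^+ K) (cvg0X K0 w0).
apply: filterS => n small.
rewrite ger0_norm // -(ler_pXn2r K'0) ?nnegrE ?(ltW eps0) //.
apply: le_trans (bound n e e0 e1) _; rewrite (splitr (eps ^+ K')) lerD //.
exact: le_trans (ler_norm _) small.
Qed.

End NullSequences.

Section LinearIndependence.
Context {R : realType} {X : Type}.

Definition lin_indep_on (P : set X) {T : nat} (H : 'I_T -> X -> R) : Prop :=
  forall c : 'I_T -> R, (forall x, P x -> \sum_(l < T) c l * H l x = 0) ->
  forall l, c l = 0.

Lemma lin_indep_on_nonzero (P : set X) (T : nat) (H : 'I_T.+1 -> X -> R) :
  lin_indep_on P H -> exists2 x0, P x0 & H ord0 x0 != 0.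
Proof.
move=> indH; apply: contrapT => H0_null.
have /(_ ord0) : forall l, (l == ord0 :> 'I_T.+1)%:R = 0 :> R.
  apply: indH => x Px; rewrite big_ord_recl /= mul1r big1 ?addr0.
    by apply: contrapT => Hx0; apply: H0_null; exists x => //; apply/eqP.
  by move=> i _; rewrite mul0r.
by rewrite eqxx => /eqP; rewrite oner_eq0.
Qed.

Section Elimination.
Variables (T : nat) (H : 'I_T.+1 -> X -> R) (x0 : X).
Hypothesis H0x0 : H ord0 x0 != 0.

(* Gaussian elimination of H_0 using the pivot x0. *)
Definition eliminate_first (l : 'I_T) (x : X) : R :=
  H (lift ord0 l) x - H (lift ord0 l) x0 * (H ord0 x / H ord0 x0).

Lemma sum_eliminate_first (c : 'I_T.+1 -> R) (x : X) :
  \sum_(l < T) c (lift ord0 l) * eliminate_first l x =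
  \sum_(l < T.+1) c l * H l x - H ord0 x / H ord0 x0 * \sum_(l < T.+1) c l * H l x0.
Proof.
rewrite !big_ord_recl /eliminate_first.
under eq_bigr do rewrite mulrBr.
rewrite sumrB mulrDr mulrCA divfK //.
have -> : \sum_(i < T) c (lift ord0 i) * (H (lift ord0 i) x0 * (H ord0 x / H ord0 x0)) =
    H ord0 x / H ord0 x0 * \sum_(i < T) c (lift ord0 i) * H (lift ord0 i) x0.
  by rewrite mulr_sumr; apply: eq_bigr => i _; ring.
ring.
Qed.

Lemma lin_indep_on_eliminate_first (P : set X) :
  P x0 -> lin_indep_on P H -> lin_indep_on P eliminate_first.
Proof.
move=> Px0 indH c hc l.
pose c' i := if unlift ord0 i is Some j then c j
             else - (\sum_(j < T) c j * H (lift ord0 j) x0) / H ord0 x0.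
have c'_lift j : c' (lift ord0 j) = c j by rewrite /c' liftK.
have c'_x0 : \sum_(i < T.+1) c' i * H i x0 = 0.
  rewrite big_ord_recl; under eq_bigr do rewrite c'_lift.
  by rewrite /c' unlift_none divfK // addNr.
rewrite -c'_lift; apply: indH => x Px.
rewrite -[RHS](hc x Px); under [RHS]eq_bigr do rewrite -c'_lift.
by rewrite sum_eliminate_first c'_x0 mulr0 subr0.
Qed.

End Elimination.

Lemma lin_indep_on_cvg0 (P : set X) (T : nat) (H : 'I_T -> X -> R)
    (rho : 'I_T -> nat -> R) :
  lin_indep_on P H ->
  (forall x, P x -> (fun n => \sum_(l < T) rho l n * H l x) @ \oo --> 0) ->
  forall l, rho l @ \oo --> 0.
Proof.
elim: T H rho => [|T IH] H rho indH hcv; first by case.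
have [x0 Px0 H0x0] := lin_indep_on_nonzero indH.
have rho_lift l : rho (lift ord0 l) @ \oo --> 0.
  apply: (IH _ (fun l => rho (lift ord0 l)) (lin_indep_on_eliminate_first H0x0 Px0 indH))
    => x Px.
  apply: (cvg0_ext (fun n => sum_eliminate_first H0x0 (rho^~ n) x)).
  exact: cvg0B (hcv x Px) (cvg0Ml _ (hcv x0 Px0)).
have rho0 : rho ord0 @ \oo --> 0.
  have rho0_pivot : (fun n => rho ord0 n * H ord0 x0) @ \oo --> 0.
    apply: (cvg0_ext (v := fun n => \sum_(l < T.+1) rho l n * H l x0
       - \sum_(l < T) rho (lift ord0 l) n * H (lift ord0 l) x0)).
      by move=> n; rewrite big_ord_recl addrK.
    apply: cvg0B (hcv x0 Px0) (cvg0_sum (fun l => cvg0Mr _ (rho_lift l))).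
  apply: (cvg0_ext (v := fun n => rho ord0 n * H ord0 x0 * (H ord0 x0)^-1)).
    by move=> n; rewrite mulfK.
  exact: cvg0Mr _ rho0_pivot.
by move=> l; case: (unliftP ord0 l) => [j ->|->].
Qed.

End LinearIndependence.

Section NullSets.
Context {R : realType} {m : nat}.
Implicit Types N : set 'rV[R]_m.

Lemma sum_interleave (g1 g2 : nat -> R) (n : nat) :
  \sum_(k < n.*2) (if odd k then g2 k./2 else g1 k./2) =
  \sum_(k < n) g1 k + \sum_(k < n) g2 k.
Proof.
elim: n => [|n IH]; first by rewrite !big_ord0 addr0.
rewrite doubleS !big_ord_recr /= IH odd_double /= doubleK uphalf_double.
by rewrite addrACA !addrA.
Qed.

Lemma lebesgue_nullU N1 N2 :
  lebesgue_null N1 -> lebesgue_null N2 -> lebesgue_null (N1 `|` N2).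
Proof.
move=> null1 null2 eps eps0.
have [a1 [b1 [ab1 [cov1 vol1]]]] := null1 _ (divr_gt0 eps0 (ltr0Sn _ 1)).
have [a2 [b2 [ab2 [cov2 vol2]]]] := null2 _ (divr_gt0 eps0 (ltr0Sn _ 1)).
pose a k := if odd k then a2 k./2 else a1 k./2.
pose b k := if odd k then b2 k./2 else b1 k./2.
exists a, b; split; first by move=> k i; rewrite /a /b; case: ifP.
split=> [x [/cov1 [k Bk]|/cov2 [k Bk]]|n].
- by exists k.*2; rewrite /a /b odd_double doubleK.
- by exists k.*2.+1; rewrite /a /b /= odd_double /= uphalf_double.
have vol_ge0 k : 0 <= box_vol (a k) (b k).
  rewrite /box_vol; apply: prodr_ge0 => i _; rewrite subr_ge0 /a /b.
  by case: ifP.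
apply: (le_trans (y := \sum_(k < n.*2) box_vol (a k) (b k))).
  have := nondecreasing_series (P := xpredT) (m := 0) (fun k _ _ => vol_ge0 k) (leq_addl n n).
  by rewrite !big_mkord addnn.
rewrite (eq_bigr (fun k : 'I_n.*2 => if odd k then box_vol (a2 k./2) (b2 k./2)
                                     else box_vol (a1 k./2) (b1 k./2))).
  by rewrite (sum_interleave (fun k => box_vol (a1 k) (b1 k)) (fun k => box_vol (a2 k) (b2 k)))
    (splitr eps) lerD.
by move=> k _; rewrite /a /b; case: ifP.
Qed.

Lemma ae_lin_indep_on N (T : nat) (H : 'I_T -> 'rV[R]_m -> R) :
  lebesgue_null N -> ae_lin_indep H -> lin_indep_on (~` N) H.
Proof. by move=> nullN indH c hc; apply: indH; exists N. Qed.

End NullSets.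

Section Invariance.
Context {R : realType} {d m k0 : nat} (f : 'rV[R]_m -> 'rV[R]_d -> R)
  (kappa : 'I_d -> nat) (p0 : 'I_k0 -> R) (e0 : 'I_k0 -> 'rV[R]_d)
  (Gs : nat -> 'rV[R]_d -> R).

Lemma kminimal_form_ratios_cvg0 (rp : relabel d k0) (T : nat)
    (H : 'I_T -> 'rV[R]_m -> R) (xi : 'I_T -> mpolyseq (rl_var rp))
    (rp' : relabel d k0) (T' : nat) (H' : 'I_T' -> 'rV[R]_m -> R)
    (xi' : 'I_T' -> mpolyseq (rl_var rp')) :
  kminimal_form f kappa p0 e0 Gs rp T H xi ->
  (forall l, xi_ratio kappa p0 e0 Gs rp (xi l) @ \oo --> 0) ->
  kminimal_form f kappa p0 e0 Gs rp' T' H' xi' ->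
  forall l, xi_ratio kappa p0 e0 Gs rp' (xi' l) @ \oo --> 0.
Proof.
move=> [_ [_ [_ [N [nullN form]]]]] ratio0 [_ [indH' [_ [N' [nullN' form']]]]].
apply: lin_indep_on_cvg0 (ae_lin_indep_on (lebesgue_nullU nullN nullN') indH') _.
move=> x /not_orP[/form xN /form' xN'].
have sum0 := cvg0_sum (fun l => cvg0Mr (H l x) (ratio0 l)).
by apply: cvg0_ext (cvg0B (cvg0D xN sum0) xN') => n; rewrite subrK opprB addrC subrK.
Qed.

End Invariance.

Section RealInequalities.
Context {R : realType}.

Lemma ler_exprn_bounded (a B : R) (k' k K : nat) : 0 <= a -> a <= B -> 1 <= B ->
  (k' <= k)%N -> (k <= K)%N -> a ^+ k <= B ^+ K * a ^+ k'.
Proof.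
move=> a0 aB B1 kk kK.
rewrite -(subnK kk) exprD ler_wpM2r ?exprn_ge0 //.
apply: le_trans (lerXn2r _ _ _ aB) _; rewrite ?nnegrE ?(le_trans a0 aB) //.
have hK : (k - k' <= K)%N by apply: leq_trans (leq_subr _ _) kK.
rewrite -(subnK hK) exprD ler_peMl ?exprn_ge0 ?exprn_ege1 //.
exact: le_trans ler01 B1.
Qed.

(* Split according to a <= e (then a^k' <= e) or a > e (then a^k' <= e^-K a^k). *)
Lemma ler_exprn_small (a e : R) (k' k K : nat) : 0 <= a -> 0 < e -> e <= 1 ->
  (0 < k')%N -> (k' <= k)%N -> (k <= K)%N -> a ^+ k' <= e^-1 ^+ K * a ^+ k + e.
Proof.
move=> a0 e0 e1 k'0 kk kK.
have eKa_ge0 : 0 <= e^-1 ^+ K * a ^+ k by rewrite mulr_ge0 ?exprn_ge0 // invr_ge0 ltW.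
case: (lerP a e) => [ae | ea].
  rewrite -[a ^+ k']add0r lerD //.
  exact: le_trans (ler_iXnr k'0 a0 (le_trans ae e1)) ae.
rewrite -[a ^+ k']addr0 lerD ?(ltW e0) // exprVn ler_pdivlMl ?exprn_gt0 //.
rewrite -(subnK kk) exprD ler_wpM2r ?exprn_ge0 //.
apply: (le_trans (y := e ^+ (k - k'))).
  by apply: ler_wiXn2l => //; [exact: ltW | exact: leq_trans (leq_subr _ _) kK].
by apply: lerXn2r; rewrite ?nnegrE ?(ltW e0) ?(ltW ea).
Qed.

Lemma powR_invnK (x : R) (K : nat) : (0 < K)%N -> 0 <= x -> powR x K%:R^-1 ^+ K = x.
Proof.
move=> K0 x0; rewrite -powR_mulrn ?powR_ge0 // -powRrM mulVf ?powRr1 //.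
by rewrite pnatr_eq0 -lt0n.
Qed.

Lemma ler_norm_entry (d : nat) (t : 'rV[R]_d) (i : 'I_d) :
  `|t ord0 i| <= `|t|.
Proof.
rewrite [`|t|]mx_normrE.
exact: (le_bigmax _ (fun ij : 'I_1 * 'I_d => `|t ij.1 ij.2|) (ord0, i)).
Qed.

Lemma compact_coord_dist_le (d : nat) (Theta : set 'rV[R]_d) :
  compact Theta -> exists2 B : R, 1 <= B &
    forall t t', Theta t -> Theta t' -> forall i, `|t ord0 i - t' ord0 i| <= B.
Proof.
move=> /compact_bounded /ex_strict_bound_gt0 [M M0 boundM].
exists (1 + (M + M)); first by rewrite lerDl addr_ge0 // ltW.
move=> t t' Theta_t Theta_t' i; apply: le_trans (ler_normB _ _) _.
apply: (le_trans (y := M + M)); last by rewrite lerDr.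
by apply: lerD; apply: le_trans (ler_norm_entry _ i) (ltW (boundM _ _)).
Qed.

Lemma normr_div_le_scale (D w w' C : R) :
  0 < w -> 0 < w' -> w <= C * w' -> `|D / w'| <= C * `|D / w|.
Proof.
move=> w0 w'0 ww'; rewrite !normrM !normfV (gtr0_norm w0) (gtr0_norm w'0).
rewrite mulrCA ler_wpM2l // -[leLHS]mul1r ler_pdivrMr // mulrAC ler_pdivlMr //.
by rewrite mul1r.
Qed.

Lemma ler_fsum (I : choiceType) (P : set I) (F G : I -> R) :
  finite_set P -> (forall i, P i -> F i <= G i) ->
  \sum_(i \in P) F i <= \sum_(i \in P) G i.
Proof.
move=> finP FG; rewrite !fsbig_finite // !big_seq; apply: ler_sum => i.
by rewrite in_fset_set // inE => /FG.
Qed.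

Lemma le_inf_affine (Q : Type) (C : Q -> Prop) (c1 c2 : Q -> R) (al be : R) :
  0 < al -> (forall y, C y -> 0 <= c1 y) ->
  (forall y, C y -> c1 y <= al * c2 y + be) -> (exists y, C y) ->
  inf [set c | exists y, C y /\ c = c1 y] <=
  al * inf [set c | exists y, C y /\ c = c2 y] + be.
Proof.
move=> al0 c1_ge0 c12 [y0 Cy0].
have lb1 : has_lbound [set c | exists y, C y /\ c = c1 y].
  by exists 0 => _ [y [Cy ->]]; exact: c1_ge0.
have : (inf [set c | exists y, C y /\ c = c1 y] - be) / al <=
       inf [set c | exists y, C y /\ c = c2 y].
  apply: lb_le_inf; first by exists (c2 y0), y0.
  move=> _ [y [Cy ->]]; rewrite ler_pdivrMr // lerBlDr mulrC.
  by apply: le_trans (c12 y Cy); apply: (ge_inf lb1); exists y.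
by rewrite ler_pdivrMr // lerBlDr mulrC.
Qed.

End RealInequalities.

Section TransportCost.
Context {R : realType} {d : nat}.
Local Notation vec := 'rV[R]_d.
Implicit Types (kap : 'I_d -> nat) (q : vec -> vec -> R).

Definition transport_cost kap (G G' : vec -> R) q : R :=
  \sum_(t \in supp G) \sum_(t' \in supp G') q t t' * d_kappa kap t t' ^+ kinf kap.

Definition transport_costs kap (G G' : vec -> R) : set R :=
  [set c | exists q, coupling G G' q /\ c = transport_cost kap G G' q].

Lemma leq_kinf kap i : (kap i <= kinf kap)%N.
Proof. exact: (leq_bigmax (F := kap) i). Qed.

Lemma kinf_gt0 kap : (0 < d)%N -> (forall i, 0 < kap i)%N -> (0 < kinf kap)%N.
Proof. by move=> d0 kap0; exact: leq_trans (kap0 (Ordinal d0)) (leq_kinf _ _). Qed.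

Lemma d_kappa_exprn kap (t t' : vec) : (0 < kinf kap)%N ->
  d_kappa kap t t' ^+ kinf kap = \sum_i `|t ord0 i - t' ord0 i| ^+ kap i.
Proof. by move=> K0; rewrite powR_invnK // sumr_ge0 // => i _; rewrite exprn_ge0. Qed.

Lemma transport_cost_ge0 kap (G G' : vec -> R) q :
  coupling G G' q -> 0 <= transport_cost kap G G' q.
Proof.
move=> [q0 _]; apply: fsumr_ge0 => t _; apply: fsumr_ge0 => t' _.
by rewrite mulr_ge0 // exprn_ge0 // powR_ge0.
Qed.

Lemma inf_transport_costs_ge0 kap (G G' : vec -> R) : 0 <= inf (transport_costs kap G G').
Proof.
have [[c Ec]|noq] := pselect (transport_costs kap G G' !=set0).
  apply: lb_le_inf; first by exists c.
  by move=> c' [q [cq ->]]; exact: transport_cost_ge0.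
suff -> : transport_costs kap G G' = set0 by rewrite inf0.
by apply/seteqP; split=> // c Ec; apply: noq; exists c.
Qed.

Lemma Wtilde_exprn kap (G G' : vec -> R) : (0 < kinf kap)%N ->
  Wtilde kap G G' ^+ kinf kap = inf (transport_costs kap G G').
Proof. by move=> K0; rewrite /Wtilde powR_invnK // inf_transport_costs_ge0. Qed.

Lemma Wtilde_gt0_coupling kap (G G' : vec -> R) : (0 < kinf kap)%N ->
  0 < Wtilde kap G G' -> exists q, coupling G G' q.
Proof.
move=> K0 W0; apply: contrapT => noq.
suff : transport_costs kap G G' = set0.
  by move=> costs0; move: (exprn_gt0 (kinf kap) W0); rewrite Wtilde_exprn // costs0 inf0 ltxx.
by apply/seteqP; split=> // c [q [cq _]]; apply: noq; exists q.
Qed.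

End TransportCost.

Section KappaComparison.
Context {R : realType} {d : nat} (kappa kappa' : 'I_d -> nat).
Local Notation vec := 'rV[R]_d.
Hypotheses (d_gt0 : (0 < d)%N) (kappa_gt0 : forall i, (0 < kappa i)%N)
  (kappa'_gt0 : forall i, (0 < kappa' i)%N) (kappa'_le : forall i, (kappa' i <= kappa i)%N).
Variables (G G' : vec -> R).
Hypotheses (finG : finite_set (supp G)) (finG' : finite_set (supp G')).

Let K_gt0 : (0 < kinf kappa)%N := kinf_gt0 d_gt0 kappa_gt0.
Let K'_gt0 : (0 < kinf kappa')%N := kinf_gt0 d_gt0 kappa'_gt0.

Lemma transport_cost_le_scale (q : vec -> vec -> R) (B : R) : 1 <= B ->
  (forall t t', supp G t -> supp G' t' -> forall i, `|t ord0 i - t' ord0 i| <= B) ->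
  coupling G G' q ->
  transport_cost kappa G G' q <= B ^+ kinf kappa * transport_cost kappa' G G' q.
Proof.
move=> B1 diffB [q0 _].
rewrite /transport_cost mulr_fsumr; apply: ler_fsum => // t Gt.
rewrite mulr_fsumr; apply: ler_fsum => // t' G't'.
rewrite !d_kappa_exprn // mulrCA ler_wpM2l // mulr_sumr; apply: ler_sum => i _.
by apply: ler_exprn_bounded => //; [exact: diffB | exact: leq_kinf].
Qed.

Lemma transport_cost_le_affine (q : vec -> vec -> R) (e : R) : 0 < e -> e <= 1 ->
  \sum_(t \in supp G) G t = 1 -> coupling G G' q ->
  transport_cost kappa' G G' q <=
  e^-1 ^+ kinf kappa * transport_cost kappa G G' q + d%:R * e.
Proof.
move=> e0 e1 massG [q0 [_ [margG _]]].
have mass_q : \sum_(t \in supp G) \sum_(t' \in supp G') q t t' = 1.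
  by rewrite (eq_fsbigr G) // => t _; exact: margG.
set a := e^-1 ^+ kinf kappa.
apply: (le_trans (y := \sum_(t \in supp G) \sum_(t' \in supp G')
   (a * (q t t' * d_kappa kappa t t' ^+ kinf kappa) + d%:R * e * q t t'))).
  apply: ler_fsum => // t Gt; apply: ler_fsum => // t' G't'.
  rewrite !d_kappa_exprn // mulrCA [_ * e * _]mulrC -mulrDr ler_wpM2l //.
  apply: (le_trans (y := \sum_(i < d) (a * `|t ord0 i - t' ord0 i| ^+ kappa i + e))).
    by apply: ler_sum => i _; apply: ler_exprn_small => //; exact: leq_kinf.
  by rewrite big_split /= -mulr_sumr sumr_const card_ord mulr_natl.
rewrite (eq_fsbigr (fun t => a * \sum_(t' \in supp G') q t t' * d_kappa kappa t t' ^+ kinf kappa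
                            + d%:R * e * \sum_(t' \in supp G') q t t')).
  by rewrite fsbig_split // -!mulr_fsumr mass_q mulr1.
by move=> t _; rewrite fsbig_split // -!mulr_fsumr.
Qed.

Hypothesis coupledGG' : exists q, coupling G G' q.

Lemma Wtilde_le_scale (B : R) : 1 <= B ->
  (forall t t', supp G t -> supp G' t' -> forall i, `|t ord0 i - t' ord0 i| <= B) ->
  Wtilde kappa G G' ^+ kinf kappa <= B ^+ kinf kappa * Wtilde kappa' G G' ^+ kinf kappa'.
Proof.
move=> B1 diffB.
(* Rewrite at explicit positions: unifying [Wtilde kappa] with [Wtilde kappa']
   unfolds [kinf] and [powR] and does not terminate in practice; the same holds
   for [//] and [done] in the presence of such hypotheses. *)
rewrite [leLHS](Wtilde_exprn G G' K_gt0) [X in _ * X](Wtilde_exprn G G' K'_gt0) -[leRHS]addr0.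
apply: (le_inf_affine (c1 := transport_cost kappa G G') (c2 := transport_cost kappa' G G'))
  coupledGG' => [|q cq|q cq].
- by rewrite exprn_gt0 // (lt_le_trans ltr01).
- exact: transport_cost_ge0.
- by rewrite addr0; exact: transport_cost_le_scale.
Qed.

Lemma Wtilde_le_affine (e : R) : 0 < e -> e <= 1 -> \sum_(t \in supp G) G t = 1 ->
  Wtilde kappa' G G' ^+ kinf kappa' <=
  e^-1 ^+ kinf kappa * Wtilde kappa G G' ^+ kinf kappa + d%:R * e.
Proof.
move=> e0 e1 massG.
rewrite [leLHS](Wtilde_exprn G G' K'_gt0) [X in _ * X](Wtilde_exprn G G' K_gt0).
apply: (le_inf_affine (c1 := transport_cost kappa' G G') (c2 := transport_cost kappa G G'))
  coupledGG' => [|q cq|q cq].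
- by rewrite exprn_gt0 // invr_gt0.
- exact: transport_cost_ge0.
- exact: transport_cost_le_affine.
Qed.

End KappaComparison.

Section Monotonicity.
Context {R : realType} {d m k0 : nat} (Theta : set 'rV[R]_d)
  (f : 'rV[R]_m -> 'rV[R]_d -> R) (p0 : 'I_k0 -> R) (e0 : 'I_k0 -> 'rV[R]_d)
  (Gcal : set ('rV[R]_d -> R)) (kappa kappa' : 'I_d -> nat).
Hypotheses (d_gt0 : (0 < d)%N) (Theta_compact : compact Theta)
  (Gcal_G0 : Gcal (atoms_measure p0 e0))
  (Gcal_prob : forall G, Gcal G -> discrete_prob Theta G)
  (kappa_gt0 : forall i, (0 < kappa i)%N) (kappa'_gt0 : forall i, (0 < kappa' i)%N)
  (kappa'_le : forall i, (kappa' i <= kappa i)%N).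

Local Notation G0 := (atoms_measure p0 e0).
Let K_gt0 : (0 < kinf kappa)%N := kinf_gt0 d_gt0 kappa_gt0.
Let K'_gt0 : (0 < kinf kappa')%N := kinf_gt0 d_gt0 kappa'_gt0.

Lemma Gcal_Wtilde_le_scale : exists2 B : R, 1 <= B & forall G, Gcal G ->
  0 < Wtilde kappa G G0 ->
  Wtilde kappa G G0 ^+ kinf kappa <= B ^+ kinf kappa * Wtilde kappa' G G0 ^+ kinf kappa'.
Proof.
have [B B1 diffB] := compact_coord_dist_le Theta_compact.
have [_ [finG0 [G0_Theta _]]] := Gcal_prob Gcal_G0.
exists B => // G /Gcal_prob [_ [finG [G_Theta _]]] W_gt0.
apply: (Wtilde_le_scale d_gt0 kappa_gt0 kappa'_gt0 kappa'_le finG finG0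
          (Wtilde_gt0_coupling K_gt0 W_gt0) B1).
by move=> t t' Gt G0t'; apply: diffB; [exact: G_Theta | exact: G0_Theta].
Qed.

Lemma Gcal_Wtilde_le_affine G (e : R) : Gcal G -> 0 < Wtilde kappa G G0 ->
  0 < e -> e <= 1 ->
  Wtilde kappa' G G0 ^+ kinf kappa' <=
  e^-1 ^+ kinf kappa * Wtilde kappa G G0 ^+ kinf kappa + d%:R * e.
Proof.
move=> /Gcal_prob [_ [finG [_ massG]]] W_gt0 e_gt0 e_le1.
have [_ [finG0 _]] := Gcal_prob Gcal_G0.
exact: (Wtilde_le_affine d_gt0 kappa_gt0 kappa'_gt0 kappa'_le finG finG0
          (Wtilde_gt0_coupling K_gt0 W_gt0) e_gt0 e_le1 massG).
Qed.

Lemma kappa_singular_le :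
  kappa_singular f Gcal kappa p0 e0 -> kappa_singular f Gcal kappa' p0 e0.
Proof.
move=> [Gs [[Gcal_Gs W0] [rp [T [H [xi [[relGs [_ [Wpos [N [nullN form]]]]] ratio0]]]]]]].
pose W n := Wtilde kappa (Gs n) G0; pose W' n := Wtilde kappa' (Gs n) G0.
have [B B1 W_le_W'] := Gcal_Wtilde_le_scale.
have {}W_le_W' n : W n ^+ kinf kappa <= B ^+ kinf kappa * W' n ^+ kinf kappa'.
  exact: W_le_W' (Gcal_Gs n) (Wpos n).
have W'_le_W n e : 0 < e -> e <= 1 ->
    W' n ^+ kinf kappa' <= e^-1 ^+ kinf kappa * W n ^+ kinf kappa + d%:R * e.
  exact: Gcal_Wtilde_le_affine (Gcal_Gs n) (Wpos n).
have W'pos n : 0 < W' n.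
  rewrite lt_def powR_ge0 andbT; apply/eqP => W'0.
  have := W_le_W' n; rewrite W'0 expr0n gtn_eqF // mulr0.
  by rewrite leNgt exprn_gt0 // Wpos.
have mix_ratio0 x : ~ N x -> (fun n =>
    (mixture f (Gs n) x - mixture f G0 x) / W n ^+ kinf kappa) @ \oo --> 0.
  move=> /form Nx; have sum0 := cvg0_sum (fun l => cvg0Mr (H l x) (ratio0 l)).
  by apply: cvg0_ext (cvg0D Nx sum0) => n; rewrite subrK.
exists Gs; split.
  split; first exact: Gcal_Gs.
  apply: (cvg0_affine_bound K_gt0 K'_gt0 (ler0n _ d) _ W'_le_W W0).
  by move=> n; exact: powR_ge0.
(* The expansion with no terms: p_{G_n} - p_{G_0} = o(W_κ'^‖κ'‖). *)
exists rp, 0%N, (fun _ _ => 0), (fun _ => [::]); split; last by case.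
split; first exact: relGs.
split; first by move=> c _ [].
split; first exact: W'pos.
exists N; split; first exact: nullN.
move=> x /mix_ratio0 mix0.
apply: (cvg0_le_scale (exprn_gt0 (kinf kappa) (lt_le_trans ltr01 B1)) _ mix0) => n.
rewrite big_ord0 subr0; apply: normr_div_le_scale (W_le_W' n).
  exact: exprn_gt0 (Wpos n).
exact: exprn_gt0 (W'pos n).
Qed.

End Monotonicity.

Theorem lemma3p4 (R : realType) (d m : nat) (Theta : set 'rV[R]_d)
    (f : 'rV[R]_m -> 'rV[R]_d -> R)
    (k0 : nat) (p0 : 'I_k0 -> R) (e0 : 'I_k0 -> 'rV[R]_d)
    (Gcal : set ('rV[R]_d -> R)) (kappa : 'I_d -> nat) :
  (0 < d)%N ->
  compact Theta ->
  (forall x t, 0 <= f x t) ->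
  (forall (k : nat) (e : 'I_k -> 'rV[R]_d), injective e -> (forall i, Theta (e i)) ->
     ae_lin_indep (fun i x => f x (e i))) ->
  injective e0 -> (forall i, 0 < p0 i) -> \sum_(i < k0) p0 i = 1 ->
  (forall i, Theta (e0 i)) ->
  Gcal (atoms_measure p0 e0) ->
  (forall G, Gcal G -> discrete_prob Theta G) ->
  (exists K : nat, forall G, Gcal G -> atoms_le K G) ->
  (forall i, (0 < kappa i)%N) ->
  unif_lipschitz Theta f (kinf kappa) ->
  (forall Gs, kseq Gcal kappa (atoms_measure p0 e0) Gs ->
     (exists (rp : @relabel R d k0) (T : nat) (H : 'I_T -> 'rV[R]_m -> R)
             (xi : 'I_T -> @mpolyseq R (rl_var rp)),
        kminimal_form f kappa p0 e0 Gs rp T H xi /\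
        forall l, xi_ratio kappa p0 e0 Gs rp (xi l) @ \oo --> 0) ->
     forall (rp' : @relabel R d k0) (T' : nat) (H' : 'I_T' -> 'rV[R]_m -> R)
            (xi' : 'I_T' -> @mpolyseq R (rl_var rp')),
       kminimal_form f kappa p0 e0 Gs rp' T' H' xi' ->
       exists phi : nat -> nat, (forall n, (phi n < phi n.+1)%N) /\
         forall l, (fun n => xi_ratio kappa p0 e0 Gs rp' (xi' l) (phi n)) @ \oo --> 0)
  /\
  (forall kappa' : 'I_d -> nat, (forall i, (0 < kappa' i)%N) ->
     (forall i, (kappa' i <= kappa i)%N) ->
     kappa_singular f Gcal kappa p0 e0 -> kappa_singular f Gcal kappa' p0 e0)
  /\
  (forall r : nat, (1 < r)%N -> kappa = (fun _ => r) ->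
     kappa_singular f Gcal (fun _ : 'I_d => r) p0 e0 ->
     kappa_singular f Gcal (fun _ : 'I_d => r.-1) p0 e0).
Proof.
move=> d_gt0 Theta_compact _ _ _ _ _ _ Gcal_G0 Gcal_prob _ kappa_gt0 _.
split; [|split].
- move=> Gs _ [rp [T [H [xi [form ratio0]]]]] rp' T' H' xi' form'.
  exists id; split=> // l.
  exact: kminimal_form_ratios_cvg0 form ratio0 form' l.
- move=> kappa' kappa'_gt0 kappa'_le.
  exact: (kappa_singular_le d_gt0 Theta_compact Gcal_G0 Gcal_prob kappa_gt0 kappa'_gt0).
- move=> r r_gt1 _.
  have r_gt0 : (0 < r)%N by exact: ltnW.
  apply: (kappa_singular_le d_gt0 Theta_compact Gcal_G0 Gcal_prob) => i //.
  + by rewrite -ltnS prednK.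
  + exact: leq_pred.
Qed.
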